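(* Let $p\geq5$ be a prime, $E\cong E_9$, $P$ of order $p$, $G=E\times P$. Let $\mathcal{A}$ be an $S$-ring over $G$ with $\mathcal{A}\cong_{\mathrm{Cay}}\mathcal{A}_i(M)$ for some $i\in\{1,\dots,11\}\setminus\{1,7,8\}$ and some $M\leq\mathrm{Aut}(P)$ such that $\mathcal{A}_i(M)$ is well-defined. Suppose $X,Y\in\mathcal{S}(\mathcal{A})$, $\langle X\rangle=\langle Y\rangle=G$ and $|X|=|Y|$. Then $X$ and $Y$ are rationally conjugate.
   Context: For a finite group $G$ with identity $e$ and $X\subseteq G$ write $\underline{X}=\sum_{x\in X}x$. An $S$-ring over $G$ is a subring $\mathcal{A}\subseteq\mathbb{Z}G$ spanned by $\{\underline{X}:X\in\mathcal{S}(\mathcal{A})\}$ for a partition $\mathcal{S}(\mathcal{A})$ of $G$ (basic sets) containing $\{e\}$ and closed under inversion. A Cayley isomorphism between $S$-rings $\mathcal{A},\mathcal{A}'$ over $G,G'$ is a group isomorphism $f:G\to G'$ with $\mathcal{S}(\mathcal{A})^f=\mathcal{S}(\mathcal{A}')$ (written $\cong_{\mathrm{Cay}}$). $X,Y\subseteq G$ are rationally conjugate if $Y=\{x^m:x\in X\}$ for some integer $m$ coprime to $|G|$. For $K\leq\mathrm{Aut}(G)$, $\mathrm{Cyc}(K,G)$ is the $S$-ring whose basic sets are the $K$-orbits. Write $E=\langle a\rangle\times\langle b\rangle$. For $K_0\trianglelefteq K\leq\mathrm{Aut}(E)$, $M_0\trianglelefteq M\leq\mathrm{Aut}(P)$ and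 an isomorphism $\psi:K/K_0\to M/M_0$, $W(K,K_0,M,M_0,\psi)=\{(\alpha,\beta)\in K\times M:\psi(\alpha K_0)=\beta M_0\}\leq\mathrm{Aut}(E\times P)$. The pairs $(K,K_0)$ number $1$–$11$ are (automorphisms given by images of $(a,b)$): 1. $K=\langle(a^2,b^2)\rangle$, $K_0=1$; 2. $K=\langle(a^2,b),(a,b^2)\rangle$, $K_0=\langle(a^2,b^2)\rangle$; 3. $K=\langle(a,ab)\rangle$, $K_0=1$; 4. $K=\langle(a^2,ab^2)\rangle$, $K_0=\langle(a^2,b^2)\rangle$; 5. $K=\langle(a^2,ab^2)\rangle$, $K_0=1$; 6. $K=\langle(b^2,a),(b,a)\rangle$, $K_0=\langle(a^2,b^2),(a^2,b)\rangle$; 7. $K=\langle(b^2,a)\rangle$, $K_0=\langle(a^2,b^2)\rangle$; 8. $K=\langle(b^2,a)\rangle$, $K_0=1$; 9. $K=\langle(ab,a^2b)\rangle$, $K_0=\langle(b^2,a)\rangle$; 10. $K=\langle(ab,a^2b)\rangle$, $K_0=\langle(a^2,b^2)\rangle$; 11. $K=\langle(ab,a^2b)\rangle$, $K_0=1$. $\mathcal{A}_i(M)$ is well-defined if $|K:K_0|$ divides $|M|$ for the pair of line $i$; then $M_0$ is the unique subgroup of the cyclic group $M$ with $M/M_0\cong K/K_0$ and $\mathcal{A}_i(M)=\mathrm{Cyc}(W(K,K_0,M,M_0,\psi_0),G)$ for a fixed isomorphism $\psi_0$ (different choices give Cayley isomorphic $S$-rings). *)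

From mathcomp Require Import all_boot all_order all_algebra all_fingroup.
Set Implicit Arguments. Unset Strict Implicit. Unset Printing Implicit Defensive.
Import GroupScope.

Section SRings.
Variable gT : finGroupType.

(* The group ring Z G is modelled by integer-valued functions on gT
   (supported on G);  \underline{X} is the indicator function of X and the
   product is convolution over G. *)
Definition uline (X : {set gT}) : {ffun gT -> int} :=
  [ffun x => Posz (x \in X)].

Definition conv (G : {set gT}) (f g : {ffun gT -> int}) : {ffun gT -> int} :=
  [ffun z => (\sum_(x in G) f x * g (x^-1 * z)%g)%R].

(* f lies in the Z-span of {uline X : X in S} (S a partition of G, f supported
   on G) iff f is constant on every member of S. *)
Definition in_span (G : {set gT}) (S : {set {set gT}}) (f : {ffun gT -> int}) :=
  (forall x, x \notin G -> f x = 0%R) /\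
  (forall X, X \in S -> forall x y, x \in X -> y \in X -> f x = f y).

(* S is the set of basic sets of an S-ring over G: a partition of G
   containing {e}, closed under inversion, whose span is a subring of Z G
   (it contains 1 = uline [set 1] and is closed under addition automatically;
   multiplicative closure is required on the spanning elements, which is
   equivalent by bilinearity). *)
Definition is_Sring (G : {set gT}) (S : {set {set gT}}) :=
  [/\ partition S G, [set 1] \in S,
      (forall X, X \in S -> X^-1 \in S)
    & (forall X Y, X \in S -> Y \in S -> in_span G S (conv G (uline X) (uline Y)))].

Definition rat_conj (G : {set gT}) (X Y : {set gT}) :=
  exists m : nat, coprime m #|G| /\ Y = [set x ^+ m | x in X].

Definition cay_iso (G : {set gT}) (S S' : {set {set gT}}) :=
  exists2 f, f \in Aut G & [set f @: X | X : {set gT} in S] = S'.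

(* The automorphisms of E sending (a, b) to (x, y) (a singleton set when
   E = <a> x <b> and such an automorphism exists). *)
Definition autg (E : {set gT}) (a b x y : gT) : {set {perm gT}} :=
  [set al in Aut E | (al a == x) && (al b == y)].

(* Generators of the pairs (K, K0) number 1 -- 11, as lists of images of (a, b). *)
Definition Kpair (i : nat) (a b : gT) : seq (gT * gT) * seq (gT * gT) :=
  match i with
  | 1 => ([:: (a ^+ 2, b ^+ 2)], [::])
  | 2 => ([:: (a ^+ 2, b); (a, b ^+ 2)], [:: (a ^+ 2, b ^+ 2)])
  | 3 => ([:: (a, a * b)], [::])
  | 4 => ([:: (a ^+ 2, a * b ^+ 2)], [:: (a ^+ 2, b ^+ 2)])
  | 5 => ([:: (a ^+ 2, a * b ^+ 2)], [::])
  | 6 => ([:: (b ^+ 2, a); (b, a)], [:: (a ^+ 2, b ^+ 2); (a ^+ 2, b)])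
  | 7 => ([:: (b ^+ 2, a)], [:: (a ^+ 2, b ^+ 2)])
  | 8 => ([:: (b ^+ 2, a)], [::])
  | 9 => ([:: (a * b, a ^+ 2 * b)], [:: (b ^+ 2, a)])
  | 10 => ([:: (a * b, a ^+ 2 * b)], [:: (a ^+ 2, b ^+ 2)])
  | 11 => ([:: (a * b, a ^+ 2 * b)], [::])
  | _ => ([::], [::])
  end.

Definition gen_auts (E : {set gT}) (a b : gT) (s : seq (gT * gT)) :
  {group {perm gT}} :=
  <<\bigcup_(v <- s) autg E a b v.1 v.2>>%G.

Definition Kgrp (E : {set gT}) (a b : gT) (i : nat) := gen_auts E a b (Kpair i a b).1.
Definition K0grp (E : {set gT}) (a b : gT) (i : nat) := gen_auts E a b (Kpair i a b).2.

(* Action of a pair (alpha, beta) in Aut(E) x Aut(P) on G = E x P: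
   e t |-> alpha(e) beta(t). *)
Definition pact (E P : {set gT}) (w : {perm gT} * {perm gT}) (x : gT) : gT :=
  w.1 (divgr E P x) * w.2 (remgr E P x).

Definition Wset (K K0 M M0 : {set {perm gT}})
  (psi : coset_of K0 -> coset_of M0) : {set {perm gT} * {perm gT}} :=
  [set w | [&& w.1 \in K, w.2 \in M & psi (coset K0 w.1) == coset M0 w.2]].

Definition cyc_sets (E P G : {set gT}) (W : {set {perm gT} * {perm gT}}) :
  {set {set gT}} :=
  [set [set pact E P w x | w in W] | x in G].

End SRings.
Arguments Wset {gT} K K0 M M0 psi.

From mathcomp Require Import all_boot all_order all_algebra all_fingroup all_solvable zify.
Set Implicit Arguments. Unset Strict Implicit. Unset Printing Implicit Defensive.

(* Writing a^i b^j as the vector (i, j) over Z/3, the groups K, K0 act on E by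
   2x2 matrices, and all the facts needed about them are finite checks.  A basic
   set generating G is the W-orbit of some x = e t with 1 <> t in P and e moved
   off its line <e> by K.  If some al in K maps e^eps (eps = 1, 2) to e', pick be
   with (al, be) in W: then be t generates P, so t' = (be t)^k, and m with
   m = eps (mod 3), m = k (mod p) gives (x^m)^(al, be) = e' t', i.e. the orbit of
   e' t' is the m-th power of the orbit of x.  Except on line 6, such an al exists
   for any two admissible e, e'.  On line 6 the exceptions pair an axis vector
   with a diagonal one, and their orbits have different sizes: at most 4|M0|
   against at least 4|M| >= 8|M0|. *)

(* [(p, q, r, s)] is the matrix over Z/3 with rows [(p, q)] and [(r, s)],
   acting on row vectors: it describes the endomorphism of E sending [a] to
   [a^p b^q] and [b] to [a^r b^s]. *)
Definition mx3 := (nat * nat * nat * nat)%type.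

Definition mx3_mul (A B : mx3) : mx3 :=
  let '(p, q, r, s) := A in let '(p', q', r', s') := B in
  ((p * p' + q * r') %% 3, (p * q' + q * s') %% 3,
   (r * p' + s * r') %% 3, (r * q' + s * s') %% 3).

Definition mx3_act (A : mx3) (v : nat * nat) : nat * nat :=
  let '(p, q, r, s) := A in ((p * v.1 + r * v.2) %% 3, (q * v.1 + s * v.2) %% 3).

Definition mx3_id : mx3 := (1, 0, 0, 1).

Definition mx3_reduced (A : mx3) :=
  let '(p, q, r, s) := A in [&& p < 3, q < 3, r < 3 & s < 3].

Definition vec3_scale (k : nat) (v : nat * nat) := ((k * v.1) %% 3, (k * v.2) %% 3).

Definition vecs3 : seq (nat * nat) := [seq (i, j) | i <- iota 0 3, j <- iota 0 3].

Definition mx3_injective (A : mx3) :=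
  all (fun v => all (fun w => (mx3_act A v == mx3_act A w) ==> (v == w)) vecs3) vecs3.

Definition mx3_closed (L : seq mx3) :=
  all (fun A => all (fun B => mx3_mul A B \in L) L) L.

(* Eight rounds suffice for the groups at hand; closedness of the result is
   checked separately ([mx3_closed]). *)
Definition mx3_closure (gs : seq mx3) : seq mx3 :=
  iter 8 (fun L => undup (L ++ [seq mx3_mul A g | A <- L, g <- gs])) [:: mx3_id].

Definition moves_line (L : seq mx3) (v : nat * nat) :=
  has (fun A => all (fun k => mx3_act A v != vec3_scale k v) (iota 0 3)) L.

Definition links (L : seq mx3) (v w : nat * nat) :=
  has (fun A => (mx3_act A (vec3_scale 1 v) == w) || (mx3_act A (vec3_scale 2 v) == w)) L.

Definition links_moved (L : seq mx3) :=
  all (fun v => all (fun w => moves_line L v ==> moves_line L w ==> links L v w) vecs3) vecs3.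

Definition axis3 (v : nat * nat) := (v != (0, 0)) && ((v.1 == 0) || (v.2 == 0)).
Definition diag3 (v : nat * nat) := (v.1 != 0) && (v.2 != 0).

Definition links_moved_but_axis_diag (L : seq mx3) :=
  all (fun v => all (fun w => moves_line L v ==> moves_line L w ==>
    [|| links L v w, axis3 v && diag3 w | diag3 v && axis3 w]) vecs3) vecs3.

(* The shape of line 6: [L0] has index 2 in [L] with [S] representing the other
   coset, [L0] fixes the axis lines while the other coset maps them as [S] does,
   and both [L0] and [L0 S] act transitively on the diagonal vectors. *)
Definition index2_swap (L L0 : seq mx3) (S : mx3) :=
  [&& mx3_mul S S == mx3_id, S \notin L0, mx3_reduced S, all mx3_reduced L0
    & all (fun A => (A \notin L0) ==> (mx3_mul A S \in L0)) L].

Definition axes_by_coset (L L0 : seq mx3) (S : mx3) :=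
  all (fun v => axis3 v ==> all (fun A =>
    if A \in L0 then (mx3_act A v == v) || (mx3_act A v == vec3_scale 2 v)
    else (mx3_act A v == mx3_act S v) || (mx3_act A v == vec3_scale 2 (mx3_act S v))) L)
    vecs3.

Definition diag_transitive (L0 : seq mx3) (S : mx3) :=
  all (fun v => all (fun u => diag3 v ==> diag3 u ==>
    has (fun A => mx3_act A v == u) L0 && has (fun A => mx3_act (mx3_mul A S) v == u) L0)
    vecs3) vecs3.

Definition mx3_gens_ok (gs : seq mx3) :=
  [&& all mx3_injective gs, mx3_closed (mx3_closure gs) & all (mem (mx3_closure gs)) gs].

Definition Kmx_ok (gs gs0 : seq mx3) :=
  let L := mx3_closure gs in let L0 := mx3_closure gs0 in
  [&& mx3_gens_ok gs, mx3_gens_ok gs0, all (mem L) gs0 &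
      links_moved L || links_moved_but_axis_diag L &&
        has (fun S => [&& index2_swap L L0 S, axes_by_coset L L0 S & diag_transitive L0 S]) L].

Lemma eqn_mod_lin d p r i j i' j' : i = i' %[mod d] -> j = j' %[mod d] ->
  p * i + r * j = p * i' + r * j' %[mod d].
Proof.
by move=> ei ej; rewrite -modnDm -modnMmr ei modnMmr -(modnMmr r) ej modnMmr modnDm.
Qed.

Lemma mem_vecs3 i j : i < 3 -> j < 3 -> (i, j) \in vecs3.
Proof. by move=> hi hj; apply/allpairsP; exists (i, j); rewrite !mem_iota. Qed.

Lemma mx3_id_closure gs : mx3_id \in mx3_closure gs.
Proof. by rewrite /mx3_closure; elim: 8 => //= n IH; rewrite mem_undup mem_cat IH. Qed.

Lemma exists_unit_mod3p p eps k : prime p -> p != 3 -> eps \in [:: 1; 2] -> k %% p != 0 ->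
  exists m, [/\ coprime m (9 * p), m %% 3 = eps & m = k %[mod p]].
Proof.
move=> pr_p p_neq3 eps12 k_nz.
have co3p : coprime 3 p by rewrite coprime_sym prime_coprime // dvdn_prime2.
have [eps_lt3 co_eps3] : eps < 3 /\ coprime eps 3.
  by move: eps12; rewrite !inE => /orP [] /eqP ->.
have co_kp : coprime k p by rewrite coprime_sym prime_coprime // /dvdn.
exists (chinese 3 p eps k); rewrite chinese_modl // chinese_modr // modn_small //.
split=> //; rewrite (_ : 9 = 3 * 3) // !coprimeMr -coprime_modl chinese_modl //.
by rewrite modn_small // co_eps3 -coprime_modl chinese_modr // coprime_modl.
Qed.

Import GroupScope.

Lemma autX (gT : finGroupType) (H : {group gT}) (f : {perm gT}) x m :
  f \in Aut H -> x \in H -> f (x ^+ m) = f x ^+ m.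
Proof. by move=> AutHf Hx; rewrite -(autmE AutHf) morphX. Qed.

Section ElementaryAbelian9.
Variables (gT : finGroupType) (E : {group gT}) (a b : gT).
Hypotheses (defE : <[a]> \x <[b]> = E) (oa : #[a] = 3) (ob : #[b] = 3).

Definition ab i j := a ^+ i * b ^+ j.

Lemma abM i j k l : ab i j * ab k l = ab (i + k) (j + l).
Proof.
have cab : commute b a.
  by case/dprodP: defE => _ _ /centsP cAB _; apply: cAB; rewrite cycle_id.
rewrite /ab !expgD -!mulgA; congr (_ * _); rewrite !mulgA; congr (_ * _).
exact: commuteX2.
Qed.

Lemma abX i j n : ab i j ^+ n = ab (i * n) (j * n).
Proof.
elim: n => [|n IH]; first by rewrite /ab !muln0 !expg0 mulg1.
by rewrite expgSr IH abM !mulnS [_ + i]addnC [_ + j]addnC.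
Qed.

Lemma ab_mod i j : ab i j = ab (i %% 3) (j %% 3).
Proof. by rewrite /ab -{1}oa -{1}ob !expg_mod_order. Qed.

Lemma eq_ab_mod i j k l : i = k %[mod 3] -> j = l %[mod 3] -> ab i j = ab k l.
Proof. by move=> eik ejl; rewrite ab_mod eik ejl -ab_mod. Qed.

Lemma ab_inj i j k l : ab i j = ab k l -> i = k %[mod 3] /\ j = l %[mod 3].
Proof.
move=> eq_ab; have := congr1 (fun z => (a ^+ k)^-1 * z * (b ^+ j)^-1) eq_ab.
rewrite /= /ab mulKg !mulgA mulgK => eq_ab'.
have : b ^+ l * (b ^+ j)^-1 \in <[a]> :&: <[b]>.
  by rewrite inE -{1}eq_ab' !groupM ?groupV ?mem_cycle.
case/dprodP: defE => _ _ _ ->; rewrite inE -eq_ab' -eq_mulVg1 => eq_a.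
move: eq_ab'; rewrite (eqP eq_a) mulVg => /esym/eqP; rewrite -eq_mulgV1 => eq_b.
by move: eq_a eq_b; rewrite !eq_expg_mod_order oa ob => /eqP -> /eqP ->.
Qed.

Lemma mem_ab i j : ab i j \in E.
Proof. by case/dprodP: defE => _ <- _ _; rewrite mem_mulg ?mem_cycle. Qed.

Lemma memE_ab z : z \in E -> exists i j, [/\ i < 3, j < 3 & z = ab i j].
Proof.
case/dprodP: defE => _ <- _ _ /mulsgP [x y /cycleP [i ->] /cycleP [j ->] ->].
by exists (i %% 3), (j %% 3); rewrite !ltn_mod -ab_mod.
Qed.

Lemma a_ab : a = ab 1 0. Proof. by rewrite /ab expg1 expg0 mulg1. Qed.
Lemma b_ab : b = ab 0 1. Proof. by rewrite /ab expg1 expg0 mul1g. Qed.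

Lemma expg3_E e : e \in E -> e ^+ 3 = 1.
Proof.
by case/memE_ab => i [j [_ _ ->]]; rewrite abX ab_mod !modnMl /ab !expg0 mulg1.
Qed.

Lemma ab_scale v k : ab v.1 v.2 ^+ k = ab (vec3_scale k v).1 (vec3_scale k v).2.
Proof. by rewrite abX; apply: eq_ab_mod; rewrite modn_mod mulnC. Qed.

Definition has_mx (al : {perm gT}) (A : mx3) :=
  let '(p, q, r, s) := A in (al a == ab p q) && (al b == ab r s).

Definition pair_mx (A : mx3) : gT * gT := let '(p, q, r, s) := A in (ab p q, ab r s).

Lemma has_mx_act al A v : al \in Aut E -> has_mx al A ->
  al (ab v.1 v.2) = ab (mx3_act A v).1 (mx3_act A v).2.
Proof.
case: A => [[[p q] r] s] AutEal /andP [/eqP al_a /eqP al_b].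
have [aE bE] : a \in E /\ b \in E by rewrite a_ab b_ab !mem_ab.
rewrite /ab -(autmE AutEal) morphM ?groupX // !morphX //= !autmE al_a al_b !abX abM.
by apply: eq_ab_mod; rewrite modn_mod; congr (_ %% 3); lia.
Qed.

Lemma has_mx_map al A v w : al \in Aut E -> has_mx al A -> mx3_act A v = w ->
  al (ab v.1 v.2) = ab w.1 w.2.
Proof. by move=> AutEal alA <-; apply: has_mx_act. Qed.

Lemma has_mxM al be A B : al \in Aut E -> be \in Aut E ->
  has_mx al A -> has_mx be B -> has_mx (al * be) (mx3_mul A B).
Proof.
case: A => [[[p q] r] s]; case: B => [[[p' q'] r'] s'] AutEal AutEbe.
move=> /andP [/eqP al_a /eqP al_b] beB; rewrite /= !permM al_a al_b.
rewrite !(has_mx_act (_, _) AutEbe beB) /=.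
by apply/andP; split; apply/eqP; apply: eq_ab_mod; rewrite !modn_mod; congr (_ %% 3); lia.
Qed.

Lemma has_mx1 : has_mx 1 mx3_id.
Proof. by rewrite /has_mx /= !perm1 -a_ab -b_ab !eqxx. Qed.

Lemma has_mx_inj al be A : al \in Aut E -> be \in Aut E ->
  has_mx al A -> has_mx be A -> al = be.
Proof.
move=> AutEal AutEbe alA beA; apply: (eq_Aut AutEal AutEbe) => z /memE_ab [i [j [_ _ ->]]].
by rewrite (has_mx_act (i, j) AutEal alA) (has_mx_act (i, j) AutEbe beA).
Qed.

Lemma has_mx_uniq al A B : mx3_reduced A -> mx3_reduced B ->
  has_mx al A -> has_mx al B -> A = B.
Proof.
case: A => [[[p q] r] s]; case: B => [[[p' q'] r'] s'] /and4P [? ? ? ?] /and4P [? ? ? ?].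
move=> /andP [/eqP al_a /eqP al_b] /andP [].
rewrite al_a al_b => /eqP /ab_inj [e1 e2] /eqP /ab_inj [e3 e4].
by move: e1 e2 e3 e4; rewrite !modn_small // => -> -> -> ->.
Qed.

Definition ab_coord (z : gT) : nat * nat :=
  odflt (0, 0) (omap (fun v : 'I_3 * 'I_3 => (nat_of_ord v.1, nat_of_ord v.2))
    [pick v : 'I_3 * 'I_3 | ab v.1 v.2 == z]).

Lemma ab_coordK z : z \in E -> ab (ab_coord z).1 (ab_coord z).2 = z.
Proof.
rewrite /ab_coord; case: pickP => [v /eqP // | no_v] /memE_ab [i [j [lti ltj def_z]]].
by move: (no_v (Ordinal lti, Ordinal ltj)); rewrite /= def_z eqxx.
Qed.

Section MxAut.
Variable A : mx3.
Hypothesis injA : mx3_injective A.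

Let f z := ab (mx3_act A (ab_coord z)).1 (mx3_act A (ab_coord z)).2.

Let f_ab i j : f (ab i j) = ab (mx3_act A (i, j)).1 (mx3_act A (i, j)).2.
Proof.
have := ab_coordK (mem_ab i j); rewrite /f; case: (ab_coord _) => i' j' /= /ab_inj [ei ej].
by case: A => [[[p q] r] s] /=; apply: eq_ab_mod; rewrite !modn_mod; apply: eqn_mod_lin.
Qed.

Let f_inj : {in E &, injective f}.
Proof.
move=> x y /memE_ab [i [j [lti ltj ->]]] /memE_ab [k [l [ltk ltl ->]]].
rewrite !f_ab => /ab_inj [].
case: A injA => [[[p q] r] s] injA' /=; rewrite !modn_mod => e1 e2.
have := allP (allP injA' _ (mem_vecs3 lti ltj)) _ (mem_vecs3 ltk ltl).
by rewrite /= e1 e2 eqxx /= => /eqP [-> ->].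
Qed.

Let f_sub : f @: E \subset E.
Proof. by apply/subsetP => z /imsetP [y _ ->]; apply: mem_ab. Qed.

Lemma exists_has_mx : exists2 al, al \in Aut E & has_mx al A.
Proof.
exists (perm_in f_inj f_sub).
  rewrite inE perm_in_on /=; apply/morphicP => x y xE yE; rewrite !perm_inE ?groupM //.
  case/memE_ab: xE => [i [j [_ _ ->]]]; case/memE_ab: yE => [k [l [_ _ ->]]].
  rewrite abM !f_ab abM; case: (A) => [[[p q] r] s] /=.
  by apply: eq_ab_mod; rewrite !modn_mod modnDm; congr (_ %% 3); lia.
rewrite /has_mx; case def_A : A => [[[p q] r] s].
rewrite !perm_inE ?a_ab ?b_ab ?mem_ab // !f_ab def_A /=.
by apply/andP; split; apply/eqP; apply: eq_ab_mod; rewrite modn_mod; congr (_ %% 3); lia.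
Qed.

End MxAut.

Definition Aut_mx (L : seq mx3) : {set {perm gT}} := [set al in Aut E | has (has_mx al) L].

Lemma Aut_mx_group_set L : mx3_id \in L -> mx3_closed L -> group_set (Aut_mx L).
Proof.
move=> L1 closedL; apply/group_setP; split.
  by rewrite inE group1; apply/hasP; exists mx3_id => //; apply: has_mx1.
move=> x y /setIdP [AutEx /hasP [A LA xA]] /setIdP [AutEy /hasP [B LB yB]].
rewrite inE groupM //; apply/hasP; exists (mx3_mul A B); last exact: has_mxM.
exact: (allP (allP closedL A LA) B LB).
Qed.

Definition realized (H : {set {perm gT}}) (A : mx3) := exists2 al, al \in H & has_mx al A.

Lemma closure_realized (H : {group {perm gT}}) gs : H \subset Aut E ->
  {in gs, forall A, realized H A} -> {in mx3_closure gs, forall A, realized H A}.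
Proof.
move=> sHA Hgs; rewrite /mx3_closure; elim: 8 => [|n IH] /= A.
  by rewrite inE => /eqP ->; exists 1 => //; apply: has_mx1.
rewrite mem_undup mem_cat => /orP [/IH // | /allpairsP [[B g] [LB gs_g ->]]] /=.
have [al Hal alB] := IH _ LB; have [be Hbe beg] := Hgs _ gs_g.
exists (al * be); first by rewrite groupM.
by apply: has_mxM => //; apply: (subsetP sHA).
Qed.

Lemma gen_auts_Aut s : gen_auts E a b s \subset Aut E.
Proof.
rewrite gen_subG bigcup_seq; apply/bigcupsP => v _.
by apply/subsetP => al /setIdP [].
Qed.

Lemma gen_auts_subG (H : {group {perm gT}}) gs : H \subset Aut E ->
  {in gs, forall A, realized H A} -> gen_auts E a b (map pair_mx gs) \subset H.
Proof.
move=> sHA Hgs; rewrite gen_subG bigcup_seq; apply/bigcupsP => v /mapP [A gs_A ->].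
apply/subsetP => al /setIdP [AutEal al_A]; have [be Hbe beA] := Hgs A gs_A.
suff -> : al = be by [].
apply: (has_mx_inj AutEal (subsetP sHA _ Hbe) _ beA).
by case: A {gs_A beA} al_A => [[[p q] r] s].
Qed.

Lemma gen_auts_mx gs : mx3_gens_ok gs ->
  gen_auts E a b (map pair_mx gs) \subset Aut_mx (mx3_closure gs) /\
  {in mx3_closure gs, forall A, realized (gen_auts E a b (map pair_mx gs)) A}.
Proof.
case/and3P=> injgs closedL gsL; split.
  have L1 := mx3_id_closure gs.
  rewrite -[Aut_mx _]/(gval (group (Aut_mx_group_set L1 closedL))) gen_subG bigcup_seq.
  apply/bigcupsP => v /mapP [A gs_A ->]; apply/subsetP => al /setIdP [AutEal al_A].
  rewrite inE AutEal; apply/hasP; exists A; first exact: (allP gsL).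
  by case: A {gs_A} al_A => [[[p q] r] s].
apply: closure_realized; first exact: gen_auts_Aut.
move=> A gs_A; have [al AutEal alA] := exists_has_mx (allP injgs A gs_A).
exists al => //; apply: mem_gen; rewrite bigcup_seq; apply/bigcupP.
exists (pair_mx A); first exact: map_f.
by rewrite inE AutEal; case: A alA {gs_A} => [[[p q] r] s].
Qed.

Lemma gen_auts_mx_sub gs gs0 : Kmx_ok gs gs0 ->
  gen_auts E a b (map pair_mx gs0) \subset gen_auts E a b (map pair_mx gs).
Proof.
case/and4P=> /gen_auts_mx [_ LK] _ gs0L _.
by apply: gen_auts_subG (gen_auts_Aut _) _ => A /(allP gs0L) /LK.
Qed.

Section Orbits.
Variables (P G : {group gT}) (p : nat) (K K0 M M0 : {group {perm gT}}).
Variable psi : {morphism K / K0 >-> coset_of M0}.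
Hypotheses (pr_p : prime p) (p_ge5 : 5 <= p) (cardP : #|P| = p) (defG : E \x P = G).
Hypotheses (sKA : K \subset Aut E) (sK0K : K0 \subset K) (sMA : M \subset Aut P).
Hypotheses (sM0M : M0 \subset M) (iKM : #|M : M0| = #|K : K0|).
Hypothesis isoK : isom (K / K0) (M / M0) psi.

Lemma commute_EP e t : e \in E -> t \in P -> commute e t.
Proof. by case/dprodP: defG => _ _ cEP _ eE tP; apply/commute_sym/(centsP cEP). Qed.

Lemma memG_EP x : x \in G -> exists e t, [/\ e \in E, t \in P & x = e * t].
Proof. by case/dprodP: defG => _ <- _ _ /mulsgP [e t eE tP ->]; exists e, t. Qed.

Lemma mem_EP e t : e \in E -> t \in P -> e * t \in G.
Proof. by case/dprodP: defG => _ <- _ _ eE tP; rewrite mem_mulg. Qed.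

Lemma card_G : #|G| = (9 * p)%N.
Proof. by rewrite -(dprod_card defG) -(dprod_card defE) -!orderE oa ob cardP. Qed.

Lemma norm_M0 : M \subset 'N(M0).
Proof.
apply: sub_abelian_norm sM0M; apply: abelianS sMA _.
by apply: Aut_cyclic_abelian; apply: prime_cyclic; rewrite cardP.
Qed.

(* As [psi] is an isomorphism, [#|K / K0| = #|M : M0| = #|K : K0|], which forces
   [K0] to be normal in [K]. *)
Lemma norm_K0 : K \subset 'N(K0).
Proof.
have card_KK0 : #|K / K0| = #|K : K0|.
  by rewrite (isom_card isoK) card_quotient ?norm_M0.
rewrite card_quotient_subnorm in card_KK0.
have sK0NK : K0 \subset 'N_K(K0) by rewrite subsetI sK0K normG.
have card_NK : #|'N_K(K0)| = #|K| by rewrite -(Lagrange sK0NK) -(Lagrange sK0K) card_KK0.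
have /eqP <- : 'N_K(K0) == K :> {set _} by rewrite eqEcard subsetIl card_NK leqnn.
exact: subsetIr.
Qed.

Local Notation W := (Wset K K0 M M0 psi).

Lemma memW w : (w \in W) = [&& w.1 \in K, w.2 \in M & psi (coset K0 w.1) == coset M0 w.2].
Proof. by rewrite inE. Qed.

Lemma memWP w : w \in W -> [/\ w.1 \in K, w.2 \in M & psi (coset K0 w.1) = coset M0 w.2].
Proof. by rewrite memW => /and3P [Kw1 Mw2 /eqP]. Qed.

Lemma W_mul w w' : w \in W -> w' \in W -> (w.1 * w'.1, w.2 * w'.2) \in W.
Proof.
rewrite !memW /= => /and3P [Kw1 Mw2 /eqP psi_w] /and3P [Kw1' Mw2' /eqP psi_w'].
have [NKw1 NMw2] := (subsetP norm_K0 _ Kw1, subsetP norm_M0 _ Mw2).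
have [NKw1' NMw2'] := (subsetP norm_K0 _ Kw1', subsetP norm_M0 _ Mw2').
by rewrite !groupM //= !morphM ?mem_quotient // psi_w psi_w'.
Qed.

Lemma W_inv w : w \in W -> (w.1^-1, w.2^-1) \in W.
Proof.
rewrite !memW /= => /and3P [Kw1 Mw2 /eqP psi_w].
have [NKw1 NMw2] := (subsetP norm_K0 _ Kw1, subsetP norm_M0 _ Mw2).
by rewrite !groupV Kw1 Mw2 /= !morphV ?mem_quotient //= psi_w.
Qed.

Lemma W_Aut w : w \in W -> w.1 \in Aut E /\ w.2 \in Aut P.
Proof. by case/memWP => Kw1 Mw2 _; rewrite (subsetP sKA) ?(subsetP sMA). Qed.

Lemma W_lift al : al \in K -> exists2 be, be \in M & (al, be) \in W.
Proof.
move=> Kal; have : psi (coset K0 al) \in M / M0.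
  by rewrite -(isom_im isoK) mem_morphim ?mem_quotient ?(subsetP norm_K0).
by case/morphimP => be _ Mbe psi_al; exists be; rewrite // memW /= Kal Mbe psi_al /=.
Qed.

Lemma pactE w e t : e \in E -> t \in P -> pact E P w (e * t) = w.1 e * w.2 t.
Proof. by case/dprodP: defG => _ _ _ tiEP eE tP; rewrite /pact divgrMid ?remgrMid. Qed.

Definition worb x := [set pact E P w x | w in W].

Lemma pactM w w' e t : w \in W -> e \in E -> t \in P ->
  pact E P w' (pact E P w (e * t)) = pact E P (w.1 * w'.1, w.2 * w'.2) (e * t).
Proof.
move=> Ww eE tP; have [AutEw1 AutPw2] := W_Aut Ww.
by rewrite !pactE ?Aut_closed //= !permM.
Qed.

Lemma worb_pact w0 z : w0 \in W -> z \in G -> worb (pact E P w0 z) = worb z.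
Proof.
move=> Ww0 /memG_EP [e [t [eE tP ->]]]; apply/setP => u; apply/imsetP/imsetP.
  case=> w Ww ->; exists (w0.1 * w.1, w0.2 * w.2); first exact: W_mul.
  exact: pactM.
case=> w Ww ->; have Ww' := W_mul (W_inv Ww0) Ww.
exists (w0.1^-1 * w.1, w0.2^-1 * w.2) => //.
by rewrite pactM //= !mulKVg; case: w {Ww Ww'}.
Qed.

Lemma worb_expg z m : z \in G -> worb (z ^+ m) = [set u ^+ m | u in worb z].
Proof.
move=> /memG_EP [e [t [eE tP ->]]]; rewrite /worb -imset_comp; apply: eq_in_imset => w Ww /=.
have [AutEw1 AutPw2] := W_Aut Ww.
have [w1eP w2tP] := (Aut_closed AutEw1 eE, Aut_closed AutPw2 tP).
rewrite (expgMn _ (commute_EP eE tP)) !pactE ?groupX // (expgMn _ (commute_EP w1eP w2tP)).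
by rewrite (autX m AutEw1 eE) (autX m AutPw2 tP).
Qed.

Lemma worb_gen_P e t : e \in E -> t \in P -> <<worb (e * t)>> = G -> t != 1.
Proof.
move=> eE tP gen_et; apply/eqP => t1; have : G \subset E.
  rewrite -gen_et gen_subG; apply/subsetP => _ /imsetP [w Ww ->].
  have [AutEw1 AutPw2] := W_Aut Ww.
  by rewrite pactE // t1 -(autmE AutPw2) morph1 mulg1 Aut_closed.
move/subset_leq_card; rewrite card_G -(dprod_card defE) -!orderE oa ob; lia.
Qed.

(* Otherwise the orbit lies in the subgroup [<[e]> * P] of order at most [3 p]. *)
Lemma worb_gen_moves e t : e \in E -> t \in P -> <<worb (e * t)>> = G ->
  exists2 al, al \in K & al e \notin <[e]>.
Proof.
move=> eE tP gen_et.
case: (boolP [exists al in K, al e \notin <[e]>]) => [/exists_inP // | ].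
rewrite negb_exists_in => /forall_inP Ke; exfalso.
have cEP : commute <[e]> P.
  by apply: centC; rewrite cycle_subG; apply/centP => u Pu; apply: commute_EP.
have : G \subset <[e]> * P.
  rewrite -comm_joingE // -gen_et gen_subG; apply/subsetP => _ /imsetP [w Ww ->].
  have [AutEw1 AutPw2] := W_Aut Ww; have [Kw1 _ _] := memWP Ww.
  rewrite pactE //; apply: groupM.
    by apply: (subsetP (joing_subl _ _)); rewrite -[_ \in _]negbK Ke.
  by apply: (subsetP (joing_subr _ _)); rewrite Aut_closed.
move/subset_leq_card; rewrite card_G => le_G.
have le_eP : #|<[e]> * P| <= (#[e] * p)%N.
  by rewrite -cardP orderE dvdn_leq ?muln_gt0 ?cardG_gt0 ?dvdn_cardMg.
have : #[e] <= 3 by rewrite dvdn_leq // order_dvdn expg3_E.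
move: le_G le_eP; nia.
Qed.

Lemma generator_P u : u \in P -> u != 1 -> <[u]> = P.
Proof.
move=> Pu u_nt; apply/eqP; rewrite eqEcard cycle_subG Pu /= cardP -orderE.
have : #[u] %| p by rewrite -cardP order_dvdG.
have ou_nt : #[u] != 1%N by rewrite eqn_leq negb_and -ltnNge order_gt1 u_nt.
by move/(prime_nt_dvdP pr_p ou_nt) ->.
Qed.

Lemma expg_modP u m : u \in P -> u ^+ m = u ^+ (m %% p).
Proof. by move=> Pu; rewrite (expg_mod _ (_ : u ^+ p = 1)) // -cardP expg_cardG. Qed.

Lemma worb_rat_conj_by e t e' t' al eps : e \in E -> e' \in E -> t \in P -> t' \in P ->
  t != 1 -> t' != 1 -> al \in K -> eps \in [:: 1%N; 2] -> al (e ^+ eps) = e' ->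
  rat_conj G (worb (e * t)) (worb (e' * t')).
Proof.
move=> eE e'E tP t'P t_nt t'_nt Kal eps12 al_e.
have [be Mbe Wal] := W_lift Kal; have AutPbe := subsetP sMA _ Mbe.
have Pu : be t \in P by rewrite Aut_closed.
have u_nt : be t != 1.
  apply: contraNneq t_nt => be_t1; apply/eqP/(@perm_inj _ be).
  by rewrite be_t1 -(autmE AutPbe) morph1.
have /cycleP [k def_t'] : t' \in <[be t]> by rewrite generator_P.
have k_nz : k %% p != 0.
  by apply: contraNneq t'_nt => kp0; rewrite def_t' expg_modP // kp0.
have p_neq3 : p != 3 by apply: contraTneq p_ge5 => ->.
have [m [co_m m3 mp]] := exists_unit_mod3p pr_p p_neq3 eps12 k_nz.
exists m; split; first by rewrite card_G.
have Gxm : (e * t) ^+ m \in G by rewrite groupX ?mem_EP.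
rewrite -worb_expg ?mem_EP // -(worb_pact Wal Gxm); congr worb.
rewrite (expgMn _ (commute_EP eE tP)) pactE ?groupX //= -(expg_mod _ (expg3_E eE)) m3 al_e.
by rewrite (autX m AutPbe tP) (expg_modP m Pu) mp -(expg_modP k Pu) def_t'.
Qed.

Lemma EP_inj e e' t t' : e \in E -> e' \in E -> t \in P -> t' \in P ->
  e * t = e' * t' -> e = e' /\ t = t'.
Proof.
case/dprodP: defG => _ _ _ tiEP eE e'E tP t'P et_e't'.
by split; [rewrite -(divgrMid tiEP eE tP) | rewrite -(remgrMid tiEP eE tP)];
  rewrite et_e't' ?divgrMid ?remgrMid.
Qed.

Lemma Aut_P_eq g g' t : g \in Aut P -> g' \in Aut P -> t \in P -> t != 1 ->
  g t = g' t -> g = g'.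
Proof.
move=> AutPg AutPg' tP t_nt gt; apply: (eq_Aut AutPg AutPg') => z.
rewrite -(generator_P tP t_nt) => /cycleP [k ->].
by rewrite (autX k AutPg tP) (autX k AutPg' tP) gt.
Qed.

Section MatrixGroup.
Variable L : seq mx3.
Hypotheses (sKL : K \subset Aut_mx L) (LK : {in L, forall A, realized K A}).

Lemma K_has_mx al : al \in K -> exists2 A, A \in L & has_mx al A.
Proof. by move/(subsetP sKL); case/setIdP => _ /hasP. Qed.

Lemma moves_line_of v al : al \in K -> al (ab v.1 v.2) \notin <[ab v.1 v.2]> ->
  moves_line L v.
Proof.
move=> Kal al_v; have [A LA alA] := K_has_mx Kal.
apply/hasP; exists A => //; apply/allP => k _; apply: contra al_v => /eqP Av.
by rewrite (has_mx_act _ (subsetP sKA _ Kal) alA) Av -ab_scale mem_cycle.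
Qed.

Lemma links_of v w : links L v w ->
  exists al eps, [/\ al \in K, eps \in [:: 1%N; 2] & al (ab v.1 v.2 ^+ eps) = ab w.1 w.2].
Proof.
case/hasP => A LA Avw; have [al Kal alA] := LK LA; have AutEal := subsetP sKA _ Kal.
by case/orP: Avw => /eqP Avw; [exists al, 1%N | exists al, 2];
  rewrite ab_scale (has_mx_act _ AutEal alA) Avw.
Qed.

Lemma worb_genP x : x \in G -> <<worb x>> = G ->
  exists v t, [/\ v \in vecs3, t \in P, t != 1, x = ab v.1 v.2 * t & moves_line L v].
Proof.
move=> Gx gen_x; have [e [t [eE tP def_x]]] := memG_EP Gx.
have [i [j [lti ltj def_e]]] := memE_ab eE.
rewrite def_x in gen_x; have [al Kal al_e] := worb_gen_moves eE tP gen_x.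
have t_nt := worb_gen_P eE tP gen_x; rewrite def_e in al_e.
exists (i, j), t; rewrite mem_vecs3 // def_x def_e; split=> //.
exact: (@moves_line_of (i, j) al Kal al_e).
Qed.

Lemma worb_rat_conj_links v w t t' : t \in P -> t' \in P -> t != 1 -> t' != 1 ->
  links L v w -> rat_conj G (worb (ab v.1 v.2 * t)) (worb (ab w.1 w.2 * t')).
Proof.
move=> tP t'P t_nt t'_nt /links_of [al [eps [Kal eps12 al_v]]].
exact: (worb_rat_conj_by (mem_ab _ _) (mem_ab _ _) tP t'P t_nt t'_nt Kal eps12 al_v).
Qed.

Lemma worb_rat_conj_moved : links_moved L -> forall x y, x \in G -> y \in G ->
  <<worb x>> = G -> <<worb y>> = G -> rat_conj G (worb x) (worb y).
Proof.
move=> linksL x y Gx Gy gen_x gen_y.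
have [v [t [vecs_v tP t_nt -> mv]]] := worb_genP Gx gen_x.
have [w [t' [vecs_w t'P t'_nt -> mw]]] := worb_genP Gy gen_y.
apply: worb_rat_conj_links => //.
by have := allP (allP linksL v vecs_v) w vecs_w; rewrite mv mw.
Qed.

Section IndexTwo.
Variables (L0 : seq mx3) (S : mx3).
Hypotheses (sK0L0 : K0 \subset Aut_mx L0) (L0K0 : {in L0, forall A, realized K0 A}).
Hypotheses (LS : S \in L) (swapS : index2_swap L L0 S).
Hypotheses (axesS : axes_by_coset L L0 S) (diagS : diag_transitive L0 S).

Lemma in_K0_of_mx al A : al \in K -> has_mx al A -> A \in L0 -> al \in K0.
Proof.
move=> Kal alA L0A; have [al0 K0al0 al0A] := L0K0 L0A.
by rewrite (has_mx_inj (subsetP sKA _ Kal) (subsetP sKA _ (subsetP sK0K _ K0al0)) alA al0A).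
Qed.

Section SwapRepresentative.
Variables s bs : {perm gT}.
Hypotheses (Ks : s \in K) (s_S : has_mx s S) (Ws : (s, bs) \in W).

Let AutEs : s \in Aut E := subsetP sKA _ Ks.

Lemma s_notin_K0 : s \notin K0.
Proof.
case/and5P: swapS => _ S_notin_L0 redS redL0 _.
apply: contra S_notin_L0 => /(subsetP sK0L0) /setIdP [_ /hasP [A L0A sA]].
by rewrite (has_mx_uniq redS (allP redL0 _ L0A) s_S sA).
Qed.

Lemma s_invg : s^-1 = s.
Proof.
case/and5P: swapS => /eqP SS _ _ _ _.
have ss1 : s * s = 1.
  by apply: (has_mx_inj (groupM AutEs AutEs) (group1 _) _ has_mx1); rewrite -SS has_mxM.
by rewrite -[s^-1]mulg1 -ss1 mulKg.
Qed.

Lemma K_mx_coset al : al \in K -> exists2 A, A \in L /\ has_mx al A &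
  if A \in L0 then coset K0 al = 1 else coset K0 al = coset K0 s.
Proof.
move=> Kal; have [A LA alA] := K_has_mx Kal; exists A => //.
case: ifP => L0A; first by apply: coset_id; apply: in_K0_of_mx alA L0A.
have K0als : al * s \in K0.
  apply: (in_K0_of_mx (groupM Kal Ks) (has_mxM (subsetP sKA _ Kal) AutEs alA s_S)).
  by case/and5P: swapS => _ _ _ _ /allP/(_ A LA); rewrite L0A.
have [NKal NKs] := (subsetP norm_K0 _ Kal, subsetP norm_K0 _ Ks).
have : coset K0 (al * s) = 1 by apply: coset_id.
rewrite morphM // => /(canRL (mulgK _)); rewrite mul1g => ->.
by rewrite -morphV // s_invg.
Qed.

Lemma W_mx_coset w : w \in W -> exists2 A, A \in L /\ has_mx w.1 A &
  if A \in L0 then w.2 \in M0 else w.2 \in M0 :* bs.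
Proof.
case/memWP => Kw1 Mw2 psi_w.
have [A LAw1 cosA] := K_mx_coset Kw1; exists A => //.
have [NMw2 NMbs] : w.2 \in 'N(M0) /\ bs \in 'N(M0).
  by case/memWP: Ws => _ Mbs _; rewrite !(subsetP norm_M0).
have [_ _ psi_s] := memWP Ws.
case: ifP cosA => _ cosA; first by apply: (coset_idr NMw2); rewrite -psi_w cosA morph1.
rewrite mem_rcoset; apply: coset_idr; first by rewrite groupM ?groupV.
by rewrite morphM ?groupV // morphV //= -psi_w cosA psi_s mulgV.
Qed.

Lemma bs_notin_M0 : bs \notin M0.
Proof.
apply: contra s_notin_K0 => M0bs; have NKs := subsetP norm_K0 _ Ks.
have psi_s : psi (coset K0 s) = 1 by case/memWP: Ws => _ _ ->; apply: coset_id.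
apply: (coset_idr NKs); apply/eqP.
by rewrite -(morph_injm_eq1 (isom_inj isoK)) ?mem_quotient // psi_s.
Qed.

Lemma card_M0_M : (2 * #|M0| <= #|M|)%N.
Proof.
have [_ Mbs _] := memWP Ws.
have iMM0 : 1 < #|M : M0|.
  by rewrite indexg_gt1; apply: contra bs_notin_M0 => /subsetP; apply.
by rewrite -(Lagrange sM0M) mulnC leq_mul2l iMM0 orbT.
Qed.

Lemma W_K0_M0 al g : al \in K0 -> g \in M0 -> (al, g) \in W.
Proof.
move=> K0al M0g.
by rewrite memW /= (subsetP sK0K) ?(subsetP sM0M) //= !coset_id // morph1.
Qed.

Lemma W_K0_coset al g : al \in K0 -> g \in M -> g \notin M0 -> (al * s, g) \in W.
Proof.
move=> K0al Mg M0'g; have NMg := subsetP norm_M0 _ Mg.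
have : coset M0 g \in M / M0 by rewrite mem_quotient.
rewrite -(isom_im isoK) => /morphimP [k _ /morphimP [al' NKal' Kal' ->] psi_al'].
have [A _ cosA] := K_mx_coset Kal'.
case: ifP cosA => _ cosA; rewrite /= cosA in psi_al'.
  by move: M0'g; rewrite (coset_idr NMg) // psi_al' morph1.
rewrite memW /= Mg coset_kerl // -psi_al' eqxx !andbT.
by apply: groupM => //; apply: (subsetP sK0K).
Qed.

Lemma worb_axis_card v t : v \in vecs3 -> axis3 v -> t \in P ->
  #|worb (ab v.1 v.2 * t)| <= 4 * #|M0|.
Proof.
move=> vecs_v axis_v tP; set e := ab v.1 v.2.
pose F (u : gT * {perm gT}) := u.1 * u.2 t.
have sub : worb (e * t) \subset
    F @: setX [set e; e ^+ 2] M0 :|: F @: setX [set s e; s e ^+ 2] (M0 :* bs).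
  apply/subsetP => _ /imsetP [w Ww ->]; rewrite pactE ?mem_ab //.
  have [AutEw1 _] := W_Aut Ww; have [A [LA w1A] cosA] := W_mx_coset Ww.
  have w1e : w.1 e = ab (mx3_act A v).1 (mx3_act A v).2 := has_mx_act v AutEw1 w1A.
  have se : s e = ab (mx3_act S v).1 (mx3_act S v).2 := has_mx_act v AutEs s_S.
  have := allP (implyP (allP axesS v vecs_v) axis_v) A LA.
  case: ifP cosA => _ cosA /orP [] /eqP Av; apply/setUP; [left | left | right | right];
    apply/imsetP; exists (w.1 e, w.2) => //;
    by rewrite in_setX cosA !inE w1e Av ?se -?ab_scale ?eqxx ?orbT.
apply: (leq_trans (subset_leq_card sub)); apply: (leq_trans (leq_card_setU _ _).1).
apply: (leq_trans (leq_add (leq_imset_card _ _) (leq_imset_card _ _))).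
rewrite !cardsX card_rcoset -mulnDl leq_mul2r !cards2.
by case: (_ != _); case: (_ != _); rewrite ?orbT.
Qed.

Lemma worb_diag_card v t : v \in vecs3 -> diag3 v -> t \in P -> t != 1 ->
  4 * #|M| <= #|worb (ab v.1 v.2 * t)|.
Proof.
move=> vecs_v diag_v tP t_nt; set e := ab v.1 v.2.
pose F (u : 'I_2 * 'I_2 * {perm gT}) := ab u.1.1.+1 u.1.2.+1 * u.2 t.
have lt3 (i : 'I_2) : i.+1 < 3 by case: i => [[|[|]]].
have injF : {in setX [set: 'I_2 * 'I_2] M &, injective F}.
  move=> [[i j] g] [[i' j'] g'] /setXP [_ Mg] /setXP [_ Mg'] /=.
  have [AutPg AutPg'] := (subsetP sMA _ Mg, subsetP sMA _ Mg').
  case/EP_inj; rewrite ?mem_ab ?Aut_closed // => /ab_inj [].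
  rewrite !modn_small ?lt3 // => -[/val_inj ->] [/val_inj ->].
  by move/(Aut_P_eq AutPg AutPg' tP t_nt) ->.
have sub : F @: setX [set: 'I_2 * 'I_2] M \subset worb (e * t).
  apply/subsetP => _ /imsetP [[[i j] g] /setXP [_ Mg] ->] /=.
  have vecs_w : (i.+1, j.+1) \in vecs3 by rewrite mem_vecs3.
  have /andP [/hasP [A0 L0A0 /eqP A0v] /hasP [A1 L0A1 /eqP A1Sv]] :=
    implyP (implyP (allP (allP diagS v vecs_v) _ vecs_w) diag_v) isT.
  apply/imsetP; case: (boolP (g \in M0)) => [M0g | M0'g].
    have [al0 K0al0 al0A0] := L0K0 L0A0.
    have al0e : al0 e = ab i.+1 j.+1 :=
      has_mx_map (subsetP sKA _ (subsetP sK0K _ K0al0)) al0A0 A0v.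
    by exists (al0, g); [apply: W_K0_M0 | rewrite pactE ?mem_ab //= al0e].
  have [al1 K0al1 al1A1] := L0K0 L0A1.
  have AutEal1 := subsetP sKA _ (subsetP sK0K _ K0al1).
  have al1se : (al1 * s) e = ab i.+1 j.+1 :=
    has_mx_map (groupM AutEal1 AutEs) (has_mxM AutEal1 AutEs al1A1 s_S) A1Sv.
  by exists (al1 * s, g); [apply: W_K0_coset | rewrite pactE ?mem_ab //= al1se].
apply: leq_trans (subset_leq_card sub).
by rewrite (card_in_imset injF) cardsX cardsT card_prod !card_ord.
Qed.

End SwapRepresentative.

Lemma worb_card_axis_lt_diag v w t t' : v \in vecs3 -> w \in vecs3 -> axis3 v -> diag3 w ->
  t \in P -> t' \in P -> t' != 1 -> #|worb (ab v.1 v.2 * t)| < #|worb (ab w.1 w.2 * t')|.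
Proof.
move=> vecs_v vecs_w axis_v diag_w tP t'P t'_nt.
have [s Ks s_S] := LK LS; have [bs _ Ws] := W_lift Ks.
apply: leq_ltn_trans (worb_axis_card Ks s_S Ws vecs_v axis_v tP) _.
apply: leq_trans (worb_diag_card Ks s_S vecs_w diag_w t'P t'_nt); rewrite ltn_pmul2l //.
exact: leq_trans (ltn_Pmull (isT : 1 < 2) (cardG_gt0 M0)) (card_M0_M Ks s_S Ws).
Qed.

End IndexTwo.

Lemma worb_rat_conj_index2 L0 S :
  K0 \subset Aut_mx L0 -> {in L0, forall A, realized K0 A} -> S \in L ->
  index2_swap L L0 S -> axes_by_coset L L0 S -> diag_transitive L0 S ->
  links_moved_but_axis_diag L -> forall x y, x \in G -> y \in G ->
  <<worb x>> = G -> <<worb y>> = G -> #|worb x| = #|worb y| -> rat_conj G (worb x) (worb y).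
Proof.
move=> sK0L0 L0K0 LS swapS axesS diagS linksL x y Gx Gy gen_x gen_y.
have [v [t [vecs_v tP t_nt -> mv]]] := worb_genP Gx gen_x.
have [w [t' [vecs_w t'P t'_nt -> mw]]] := worb_genP Gy gen_y.
have lt_card := worb_card_axis_lt_diag sK0L0 L0K0 LS swapS axesS diagS.
have := allP (allP linksL v vecs_v) w vecs_w; rewrite mv mw /=.
case/or3P => [/(worb_rat_conj_links tP t'P t_nt t'_nt) // | /andP [ax dg] | /andP [dg ax]] card_xy.
  by have := lt_card _ _ _ _ vecs_v vecs_w ax dg tP t'P t'_nt; rewrite card_xy ltnn.
by have := lt_card _ _ _ _ vecs_w vecs_v ax dg t'P tP t_nt; rewrite card_xy ltnn.
Qed.

End MatrixGroup.

Lemma worb_rat_conj gs gs0 :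
  K :=: gen_auts E a b (map pair_mx gs) -> K0 :=: gen_auts E a b (map pair_mx gs0) ->
  Kmx_ok gs gs0 -> forall x y, x \in G -> y \in G ->
  <<worb x>> = G -> <<worb y>> = G -> #|worb x| = #|worb y| -> rat_conj G (worb x) (worb y).
Proof.
move=> defK defK0 /and4P [/gen_auts_mx [sKL LK] /gen_auts_mx [sK0L0 L0K0] _ linksL].
rewrite -defK in sKL LK; rewrite -defK0 in sK0L0 L0K0.
case/orP: linksL => [linksL x y Gx Gy gen_x gen_y _ | /andP [linksL /hasP [S LS]]].
  exact: (worb_rat_conj_moved sKL LK linksL).
case/and3P => swapS axesS diagS.
exact: (worb_rat_conj_index2 sKL LK sK0L0 L0K0 LS swapS axesS diagS linksL).
Qed.

End Orbits.
End ElementaryAbelian9.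

Lemma rat_conj_autm (gT : finGroupType) (G : {group gT}) (f : {perm gT}) (X Y : {set gT}) :
  f \in Aut G -> X \subset G -> rat_conj G (f @: X) (f @: Y) -> rat_conj G X Y.
Proof.
move=> AutGf sXG [m [co_m fY]]; exists m; split=> //.
apply: (imset_inj (@perm_inj _ f)); rewrite fY -!imset_comp; apply: eq_in_imset => x Xx /=.
by rewrite (autX m AutGf (subsetP sXG x Xx)).
Qed.

Lemma rat_conj_cay_iso (gT : finGroupType) (G : {group gT}) (S S' : {set {set gT}})
    (X Y : {set gT}) :
  is_Sring G S -> cay_iso G S S' ->
  {in S' &, forall X' Y', <<X'>> = G -> <<Y'>> = G -> #|X'| = #|Y'| -> rat_conj G X' Y'} ->
  X \in S -> Y \in S -> <<X>> = G -> <<Y>> = G -> #|X| = #|Y| -> rat_conj G X Y.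
Proof.
case=> partS _ _ _ [f AutGf defS'] S'rc SX SY gen_X gen_Y card_XY.
have sub Z : Z \in S -> Z \subset G.
  by move=> SZ; case/and3P: partS => /eqP <- _ _; apply: bigcup_sup.
have S'f Z : Z \in S -> f @: Z \in S' by move=> SZ; rewrite -defS' imset_f.
have gen_f Z : Z \in S -> <<Z>> = G -> <<f @: Z>> = G.
  move=> SZ gen_Z; have fZ : autm AutGf @* Z = f @: Z by rewrite morphimEsub ?sub.
  by rewrite -fZ -morphim_gen ?sub // gen_Z im_autm.
apply: (rat_conj_autm AutGf (sub X SX)); apply: S'rc; rewrite ?S'f ?gen_f //.
by rewrite !card_imset //; apply: perm_inj.
Qed.

Definition Kmx (i : nat) : seq mx3 * seq mx3 :=
  (match i with
  | 2 => ([:: (2, 0, 0, 1); (1, 0, 0, 2)], [:: (2, 0, 0, 2)])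
  | 3 => ([:: (1, 0, 1, 1)], [::])
  | 4 => ([:: (2, 0, 1, 2)], [:: (2, 0, 0, 2)])
  | 5 => ([:: (2, 0, 1, 2)], [::])
  | 6 => ([:: (0, 2, 1, 0); (0, 1, 1, 0)], [:: (2, 0, 0, 2); (2, 0, 0, 1)])
  | 9 => ([:: (1, 1, 2, 1)], [:: (0, 2, 1, 0)])
  | 10 => ([:: (1, 1, 2, 1)], [:: (2, 0, 0, 2)])
  | 11 => ([:: (1, 1, 2, 1)], [::])
  | _ => ([::], [::])
  end)%N.

Lemma Kpair_Kmx (gT : finGroupType) (a b : gT) i : i \in [:: 2; 3; 4; 5; 6; 9; 10; 11] ->
  Kpair i a b = (map (pair_mx a b) (Kmx i).1, map (pair_mx a b) (Kmx i).2).
Proof.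
rewrite !inE => /or4P [| | | /or4P [| | | /orP []]] /eqP -> /=;
  by rewrite /ab ?expg0 ?expg1 ?mulg1 ?mul1g.
Qed.

Lemma Kmx_ok_lines : all (fun i => Kmx_ok (Kmx i).1 (Kmx i).2) [:: 2; 3; 4; 5; 6; 9; 10; 11].
Proof. by vm_compute. Qed.

Theorem lemma3p6 (gT : finGroupType) (E P G : {group gT}) (a b : gT) (p : nat)
  (i : nat) (M M0 : {group {perm gT}})
  (psi : {morphism Kgrp E a b i / K0grp E a b i >-> coset_of M0})
  (S : {set {set gT}}) (X Y : {set gT}) :
  prime p -> 5 <= p ->
  <[a]> \x <[b]> = E -> #[a] = 3 -> #[b] = 3 ->
  #|P| = p -> E \x P = G ->
  i \in [:: 2; 3; 4; 5; 6; 9; 10; 11] ->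
  M \subset Aut P ->
  #|Kgrp E a b i : K0grp E a b i| %| #|M| ->
  M0 \subset M -> #|M : M0| = #|Kgrp E a b i : K0grp E a b i| ->
  isom (Kgrp E a b i / K0grp E a b i) (M / M0) psi ->
  is_Sring G S ->
  cay_iso G S (cyc_sets E P G (Wset (Kgrp E a b i) (K0grp E a b i) M M0 psi)) ->
  X \in S -> Y \in S -> <<X>> = G -> <<Y>> = G -> #|X| = #|Y| ->
  rat_conj G X Y.
Proof.
move=> pr_p p_ge5 defE oa ob cardP defG line_i sMA _ sM0M iKM isoK SringS cayS.
have ok_i : Kmx_ok (Kmx i).1 (Kmx i).2 := allP Kmx_ok_lines i line_i.
have [defK defK0] : Kgrp E a b i :=: gen_auts E a b (map (pair_mx a b) (Kmx i).1) /\
                    K0grp E a b i :=: gen_auts E a b (map (pair_mx a b) (Kmx i).2).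
  by rewrite /Kgrp /K0grp (Kpair_Kmx a b line_i).
have sKA : Kgrp E a b i \subset Aut E by rewrite defK gen_auts_Aut.
have sK0K : K0grp E a b i \subset Kgrp E a b i by rewrite defK defK0 gen_auts_mx_sub.
apply: (rat_conj_cay_iso SringS cayS) => _ _ /imsetP [x Gx ->] /imsetP [y Gy ->].
exact: (worb_rat_conj defE oa ob pr_p p_ge5 cardP defG sKA sK0K sMA sM0M iKM isoK
  defK defK0 ok_i Gx Gy).
Qed.
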